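(* For every $m\ge1$ and $n\ge1$ there is an injective map from $Q_5(m,n)$ to $P_5(-m,n)$.
   Context: Partitions: $\lambda_1\ge\cdots\ge\lambda_\ell>0$, $\ell(\lambda)=\ell$, $\lambda_i=0$ for $i>\ell$, $s(\lambda)$ the smallest part with $s(\emptyset)=+\infty$. Rank $=\lambda_1-\ell$; rank-set $=[-\lambda_1,1-\lambda_2,\dots,\ell-1-\lambda_\ell,\ell,\ell+1,\dots]$. $Q(m,n)$: partitions of $n$ whose rank-set contains $m$; $P(-m,n)$: partitions of $n$ with rank $\ge-m$. $m$-Durfee rectangle symbol $(\alpha,\beta)_{(m+j)\times j}$ of $\lambda$: $j\ge0$ is the largest integer with $\lambda_{m+j}\ge j$; $\alpha$ is the conjugate of $(\lambda_1-j,\dots,\lambda_{m+j}-j)$ and $\beta=(\lambda_{m+j+1},\lambda_{m+j+2},\dots)$; $|\lambda|=|\alpha|+|\beta|+j(m+j)$. $Q_5(m,n)$ is the set of $\lambda\in Q(m,n)$ whose symbol has $j\ge1$, $\ell(\beta)-\ell(\alpha)\ge1$, $\alpha_1=\alpha_2=m+j>\alpha_3$ and $s(\beta)\ge2$. $P_5(-m,n)$ is the set of $\mu\in P(-m,n)$ whose symbol $(\gamma,\delta)_{(m+j')\times j'}$ has $j'\ge1$, $\ell(\gamma)=\ell(\delta)$, $\gamma_1\le m+j'-3$ and $\delta_1=j'$. *)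

From mathcomp Require Import all_boot all_order all_algebra.
Set Implicit Arguments. Unset Strict Implicit. Unset Printing Implicit Defensive.
Import GRing.Theory Num.Theory.

Definition is_partition (l : seq nat) : bool :=
  sorted geq l && all (fun x => 0 < x) l.

Definition partition_of (n : nat) (l : seq nat) : bool :=
  is_partition l && (sumn l == n).

(* λ_i, 1-indexed, with λ_i = 0 for i > ℓ (and for i = 0, unused). *)
Definition part (l : seq nat) (i : nat) : nat := nth 0 l i.-1.

Definition rank (l : seq nat) : int := (Posz (part l 1) - Posz (size l))%R.

Definition in_rankset (m : int) (l : seq nat) : bool :=
  (has (fun i => (Posz i - Posz (part l i.+1) == m)%R) (iota 0 (size l)))
  || (Posz (size l) <= m)%R.

Definition inQ (m : int) (n : nat) (l : seq nat) : bool :=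
  partition_of n l && in_rankset m l.
Definition inP_neg (m : int) (n : nat) (l : seq nat) : bool :=
  partition_of n l && (- m <= rank l)%R.

Definition conj_part (s : seq nat) : seq nat :=
  mkseq (fun k => count (fun x => k < x) s) (\max_(x <- s) x).

(* Any such j satisfies j <= ℓ
   (for j >= 1, λ_{m+j} >= j > 0 forces m+j <= ℓ), so the bounded max
   below is the largest such j. *)
Definition durfee_j (m : nat) (l : seq nat) : nat :=
  \max_(0 <= j < (size l).+1 | j <= part l (m + j)) j.

Definition durfee_alpha (m : nat) (l : seq nat) : seq nat :=
  let j := durfee_j m l in conj_part [seq x - j | x <- take (m + j) l].

Definition durfee_beta (m : nat) (l : seq nat) : seq nat :=
  drop (m + durfee_j m l) l.

(* "s(β) >= k" where s(β) is the smallest part and s(∅) = +∞ *)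
Definition smallest_part_ge (k : nat) (b : seq nat) : bool :=
  all (fun x => k <= x) b.

Definition inQ5 (m n : nat) (l : seq nat) : bool :=
  let j := durfee_j m l in
  let a := durfee_alpha m l in
  let b := durfee_beta m l in
  [&& inQ (Posz m) n l,
      1 <= j,
      (size a).+1 <= size b,
      part a 1 == m + j,
      part a 2 == m + j,
      part a 3 < m + j &
      smallest_part_ge 2 b].

Definition inP5 (m n : nat) (mu : seq nat) : bool :=
  let j := durfee_j m mu in
  let g := durfee_alpha m mu in
  let d := durfee_beta m mu in
  [&& inP_neg (Posz m) n mu,
      1 <= j,
      size g == size d,
      part g 1 + 3 <= m + j &
      part d 1 == j].

From mathcomp Require Import all_boot all_order all_algebra.
From mathcomp Require Import zify.
Set Implicit Arguments. Unset Strict Implicit. Unset Printing Implicit Defensive.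

(* Let l be in Q_5(m,n), with m-Durfee height j and M = m + j.  Unfolding the
   definition of Q_5 (and the rank-set condition) pins down its shape: the
   first M parts are >= j+2 with lambda_M = j+2, lambda_{M+1} = j, j >= 2, and
   beta = (lambda_{M+1}, ...) has all parts in [2, j] and at least
   lambda_1 - j + 1 of them.  Put y = lambda_{j+1} - (j+2), s = l(beta),
   h = (m-1) div 2, e = (m-1) mod 2, and define
     pi_0 = s - 1 + y + h,
     pi_r = #{parts of beta > r+1} - 1 + y            (1 <= r <= j-2),
     pi_r = lambda_{r+2} - (j+2)                      (j-1 <= r < M-2),
     D_k  = lambda_{k+1} - lambda_{j+1} + 1 + [k = 0] e    (k < j).
   The image is  phi5 l = (j+1+pi_r)_{r<M-2} ++ (j+1)^3 ++ conj(pi_0 :: D).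
   Both pi and pi_0 :: D are nonincreasing with maximum pi_0, so phi5 l is a
   partition with m-Durfee height j+1, gamma = conj(pi, 0^3), delta =
   conj(pi_0 :: D), and weight n (a block-by-block count).  Conversely lambda
   is recovered from j, pi and D (explicit formulas for its parts and for the
   counts of parts of beta), which gives injectivity. *)

Lemma geq_trans : transitive geq.
Proof. by move=> a b c Hba Hcb; apply: leq_trans Hcb Hba. Qed.

Lemma sorted_geq_nth (s : seq nat) i k :
  sorted geq s -> i <= k -> nth 0 s k <= nth 0 s i.
Proof.
move=> Hs Hik; case: (ltnP k (size s)) => Hk; last by rewrite nth_default.
by apply: (sorted_leq_nth geq_trans leqnn 0 Hs) => //; rewrite inE; lia.
Qed.

Lemma part_antimono (l : seq nat) i k :
  sorted geq l -> i <= k -> part l k <= part l i.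
Proof. by move=> Hs Hik; apply: sorted_geq_nth => //; lia. Qed.

Lemma count_mem_split (s : seq nat) c :
  count_mem c s + count (fun x => c < x) s = count (fun x => c <= x) s.
Proof. by elim: s => //= x s <-; case: ltngtP; lia. Qed.

Lemma sorted_geq_eq (s1 s2 : seq nat) : sorted geq s1 -> sorted geq s2 ->
  (forall c, count (fun x => c <= x) s1 = count (fun x => c <= x) s2) -> s1 = s2.
Proof.
move=> Hs1 Hs2 Hc; apply: (sorted_eq geq_trans) => //.
  by move=> x y; rewrite andbC => /anti_leq.
apply/allP => c _; apply/eqP/(@addIn (count (fun x => c < x) s1)).
by rewrite {2}(Hc c.+1) !count_mem_split Hc.
Qed.

Lemma sorted_max_head (x : nat) s : sorted geq (x :: s) -> \max_(y <- x :: s) y = x.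
Proof.
move=> /(order_path_min geq_trans) /allP Hs.
by rewrite big_cons; apply/maxn_idPl/bigmax_leqP_seq => y /Hs.
Qed.

Lemma sumn_mkseq (f : nat -> nat) k : sumn (mkseq f k) = \sum_(0 <= i < k) f i.
Proof. by rewrite sumnE big_map /index_iota subn0. Qed.

Lemma sumn_take (s : seq nat) k : k <= size s ->
  sumn (take k s) = \sum_(0 <= i < k) nth 0 s i.
Proof.
elim: s k => [|x s IH] [|k] //= Hk; try by rewrite big_geq.
by rewrite big_ltn // big_add1 /= IH.
Qed.

Lemma sum_indicator_lt (x k : nat) : \sum_(0 <= c < k) (c < x) = minn x k.
Proof. by elim: k => [|k IH]; [rewrite big_geq; lia | rewrite big_nat_recr //= IH; lia]. Qed.

Lemma sum_count_gt (s : seq nat) k : all (fun x => x <= k) s ->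
  \sum_(0 <= c < k) count (fun x => c < x) s = sumn s.
Proof.
elim: s => [|x s IH] /=; first by rewrite big1.
by case/andP=> Hx Hs; rewrite big_split /= IH // sum_indicator_lt; lia.
Qed.

Lemma leq_max_seq (s : seq nat) x : x \in s -> x <= \max_(y <- s) y.
Proof. by move=> Hx; apply: (leq_bigmax_seq x Hx). Qed.

Lemma size_conj (s : seq nat) : size (conj_part s) = \max_(x <- s) x.
Proof. by rewrite size_mkseq. Qed.

Lemma nth_conj (s : seq nat) k : nth 0 (conj_part s) k = count (fun x => k < x) s.
Proof.
case: (ltnP k (\max_(x <- s) x)) => Hk; first by rewrite nth_mkseq.
rewrite nth_default ?size_conj //; apply/esym/eqP; rewrite -leqn0 leqNgt -has_count.
by apply/hasPn => x /leq_max_seq Hx; rewrite -leqNgt (leq_trans Hx Hk).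
Qed.

Lemma conj_pos (s : seq nat) : all (fun x => 0 < x) (conj_part s).
Proof.
apply/allP => x /(nthP 0)[k]; rewrite size_conj => Hk <-; rewrite nth_conj -has_count.
apply/negPn/negP => /hasPn Hs; suff : \max_(x <- s) x <= k by rewrite leqNgt Hk.
by apply/bigmax_leqP_seq => y /Hs; rewrite -leqNgt.
Qed.

Lemma sumn_conj (s : seq nat) : sumn (conj_part s) = sumn s.
Proof.
rewrite sumn_mkseq sum_count_gt //.
by apply/allP => x /leq_max_seq.
Qed.

(* Conjugation is injective on nonincreasing sequences of a given length (the length
   accounts for the zero entries, which the conjugate does not see). *)
Lemma conj_inj (s1 s2 : seq nat) : sorted geq s1 -> sorted geq s2 ->
  size s1 = size s2 -> conj_part s1 = conj_part s2 -> s1 = s2.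
Proof.
move=> Hs1 Hs2 Hsz Hc; apply: sorted_geq_eq => // -[|c].
  by rewrite !(eq_count (a2 := predT)) // !count_predT.
by rewrite -!nth_conj Hc.
Qed.

Lemma durfee_ge m l j' : j' <= size l -> j' <= part l (m + j') -> j' <= durfee_j m l.
Proof. by move=> Hs Hj; apply: (leq_bigmax_seq j') => //; rewrite mem_index_iota. Qed.

Lemma durfee_le m l k :
  (forall j', k < j' -> j' <= size l -> part l (m + j') < j') -> durfee_j m l <= k.
Proof.
move=> Hk; apply/bigmax_leqP_seq => j'; rewrite mem_index_iota ltnS => /andP[_ Hs] Hj.
by rewrite leqNgt; apply/negP => /Hk /(_ Hs); rewrite ltnNge Hj.
Qed.

Lemma sum_nat_succ (F : nat -> nat) a b : 0 < a ->
  \sum_(a - 1 <= i < b - 1) F i.+1 = \sum_(a <= i < b) F i.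
Proof. by case: a => // a _; rewrite subSS subn0 subn1 big_add1. Qed.

Lemma sumn_nth (s : seq nat) : sumn s = \sum_(0 <= i < size s) nth 0 s i.
Proof. by rewrite -sumn_take ?take_size. Qed.

(* The arithmetic identity behind the weight of phi5 l, once every block has been
   summed; the hypotheses are the block sums established below. *)
Lemma weight_balance (m j s y h e Lc SD SM SL SC X Y : nat) :
  2 <= j -> 1 <= m -> 0 < s -> e + h.*2 = m.-1 -> Lc = y + j.+2 ->
  SD + j * Lc = X + j + e ->
  SM + (j - 2) = SC + (j - 2) * y ->
  SL + (m - 1) * j.+2 = Y ->
  (m + j - 2) * j.+1 + (s.-1 + y + h + (SM + SL)) + (j.+1 * 3 + (s.-1 + y + h + SD)) =
  X + Y + j.+2 + (s.*2 + SC).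
Proof.
case: j => [|[|j]] // _; case: m => [|m] // _; case: s => [|s] // _.
rewrite addnS addnS !subn2 !subn1 /= => Hhe -> HD HM HL.
nia.
Qed.

(* With j the m-Durfee height and beta the part below the rectangle,
   excess m l = y is lambda_{j+1} - (j+2), pi_entry m l r the r-th entry of pi, diff_part m l
   the sequence D, and delta_code m l = pi_0 :: D the sequence whose conjugate is delta. *)
Definition excess (m : nat) (l : seq nat) : nat :=
  part l (durfee_j m l).+1 - (durfee_j m l).+2.

Definition pi_entry (m : nat) (l : seq nat) (r : nat) : nat :=
  if r == 0 then (size (durfee_beta m l)).-1 + excess m l + (m.-1)./2
  else if r <= durfee_j m l - 2 then
    count (fun x => r.+1 < x) (durfee_beta m l) - 1 + excess m l
  else part l r.+2 - (durfee_j m l).+2.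

Definition diff_part (m : nat) (l : seq nat) : seq nat :=
  mkseq (fun k => part l k.+1 - part l (durfee_j m l).+1 + 1 + ((k == 0) && odd m.-1))
        (durfee_j m l).

Definition delta_code (m : nat) (l : seq nat) : seq nat := pi_entry m l 0 :: diff_part m l.

Definition top_block (m : nat) (l : seq nat) : seq nat :=
  mkseq (fun r => (durfee_j m l).+1 + pi_entry m l r) (m + durfee_j m l - 2).

Definition phi5 (m : nat) (l : seq nat) : seq nat :=
  top_block m l ++ nseq 3 (durfee_j m l).+1 ++ conj_part (delta_code m l).

(* Throughout, l is a fixed element of Q_5(m,n); every lemma of the section takes hm and HQ,
   so that all of them have the same interface when used for two partitions. *)
Section Q5Partition.
#[local] Set Default Proof Using "All".
Variables (m n : nat) (l : seq nat).
Hypotheses (hm : 1 <= m) (HQ : inQ5 m n l).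
Local Notation j := (durfee_j m l).
Local Notation M := (m + durfee_j m l).
Local Notation beta := (durfee_beta m l).

(* The conditions defining Q_5(m,n), read on l itself: alpha_2 = m+j and alpha_3 < m+j
   say that the first m+j parts minus j are all >= 2 but not all >= 3. *)
Lemma Q5_conditions :
  [/\ sorted geq l /\ sumn l = n, in_rankset (Posz m) l,
      size (durfee_alpha m l) < size beta,
      count (fun x => 1 < x - j) (take M l) = M /\
        count (fun x => 2 < x - j) (take M l) < M
    & all (leq 2) beta].
Proof.
case/and4P: HQ => /andP[/andP[/andP[Hs _] /eqP Hsum] Hrk] _ Hsz /and4P[_].
by rewrite /part /= !nth_conj !count_map => /eqP Ha2 Ha3 Hb.
Qed.

Lemma Q5_sorted : sorted geq l.
Proof. by case: Q5_conditions => [[]]. Qed.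

Lemma Q5_sum : sumn l = n.
Proof. by case: Q5_conditions => [[]]. Qed.

(* beta is nonempty, so l has more than m+j parts. *)
Lemma Q5_size : M < size l.
Proof. by case: Q5_conditions => _ _; rewrite size_drop; lia. Qed.

Lemma Q5_take_size : size (take M l) = M.
Proof. by rewrite size_take Q5_size. Qed.

Lemma Q5_top i : 0 < i <= M -> j.+2 <= part l i.
Proof.
case: Q5_conditions => _ _ _ [Hall _] _ Hi.
have /(all_nthP 0) Htop : all (fun x => 1 < x - j) (take M l).
  by rewrite all_count Q5_take_size Hall.
have Hi' : i.-1 < size (take M l) by rewrite Q5_take_size; lia.
by have := Htop _ Hi'; rewrite nth_take /part; lia.
Qed.

Lemma Q5_corner : part l M = j.+2.
Proof.
case: Q5_conditions => _ _ _ [_ Hlt] _.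
apply/anti_leq; rewrite Q5_top ?andbT; last by lia.
rewrite leqNgt; apply/negP => Hgt.
have : all (fun x => 2 < x - j) (take M l).
  apply/(all_nthP 0) => k; rewrite Q5_take_size => Hk; rewrite nth_take //.
  by have := part_antimono Q5_sorted Hk; move: Hgt; rewrite /part /=; lia.
by rewrite all_count Q5_take_size => /eqP Hall; rewrite Hall ltnn in Hlt.
Qed.

(* The rank-set condition forces lambda_{m+j+1} = j: it is at most j by maximality of j,
   and m = i - lambda_{i+1} is only possible for i = m+j. *)
Lemma Q5_below : part l M.+1 = j.
Proof.
have Hle : part l M.+1 <= j.
  rewrite -ltnS ltnNge -addnS; apply/negP => Hj.
  have Hs : j.+1 <= size l by have := Q5_size; lia.
  by have := durfee_ge Hs Hj; rewrite ltnn.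
case: Q5_conditions => _ /orP[|]; last by rewrite lez_nat; have := Q5_size; lia.
case/hasP => i; rewrite mem_iota add0n => /andP[_ Hi] /eqP Hrank.
have HiM : M <= i.
  by rewrite leqNgt; apply/negP => HiM; have := Q5_top (_ : 0 < i.+1 <= M); lia.
by have := @part_antimono l M.+1 i.+1 Q5_sorted; lia.
Qed.

Lemma Q5_beta_head : nth 0 beta 0 = j.
Proof. by rewrite /durfee_beta nth_drop addn0; exact: Q5_below. Qed.

Lemma Q5_beta_size : 0 < size beta.
Proof. by rewrite size_drop; have := Q5_size; lia. Qed.

Lemma Q5_j_in_beta : j \in beta.
Proof. by rewrite -Q5_beta_head mem_nth ?Q5_beta_size. Qed.

Lemma Q5_beta_range : all (fun x => 2 <= x <= j) beta.
Proof.
case: Q5_conditions => _ _ _ _ /allP Hge2; apply/allP => x Hx; rewrite Hge2 //=.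
move: Hx => /(nthP 0)[k Hk <-]; rewrite nth_drop.
apply: leq_trans (sorted_geq_nth Q5_sorted (leq_addr k M)) _.
by rewrite -/(part l M.+1) Q5_below.
Qed.

Lemma Q5_j : 2 <= j.
Proof. by have /andP[] := allP Q5_beta_range _ Q5_j_in_beta. Qed.

(* l(beta) > l(alpha) >= lambda_1 - j. *)
Lemma Q5_beta_long : part l 1 - j < size beta.
Proof.
case: Q5_conditions => _ _ Hsz _ _; apply: leq_ltn_trans Hsz; rewrite size_conj.
apply/leq_max_seq/map_f; rewrite /part /= -(@nth_take M _ 0 0); last by lia.
by rewrite mem_nth // Q5_take_size; lia.
Qed.

Local Notation y := (excess m l).
Local Notation pi := (pi_entry m l).
Local Notation D := (diff_part m l).

(* lambda_{j+1} = y + (j+2), since row j+1 of the rectangle has length >= j+2. *)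
Lemma excess_corner : part l j.+1 = y + j.+2.
Proof. by have := Q5_top (_ : 0 < j.+1 <= M); rewrite /excess; lia. Qed.

(* Since j is a part of beta, beta has parts > c for every c < j. *)
Lemma count_beta_pos c : c < j -> 0 < count (fun x => c < x) beta.
Proof. by move=> Hc; rewrite -has_count; apply/hasP; exists j => //; exact: Q5_j_in_beta. Qed.

Lemma pi_head : pi 0 = (size beta).-1 + y + (m.-1)./2.
Proof. by []. Qed.

Lemma pi_mid r : 0 < r <= j - 2 -> pi r + 1 = count (fun x => r.+1 < x) beta + y.
Proof.
move=> Hr; rewrite /pi_entry ifF ?ifT; try lia.
by have := count_beta_pos (_ : r.+1 < j); lia.
Qed.

Lemma pi_low r : j - 2 < r -> r.+2 <= M -> pi r + j.+2 = part l r.+2.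
Proof.
move=> Hr HrM; rewrite /pi_entry ifF ?ifF; try lia.
by have := Q5_top (_ : 0 < r.+2 <= M); lia.
Qed.

Lemma pi_ge_excess r : r <= j - 2 -> y <= pi r.
Proof.
case: r => [_|r Hr]; first by rewrite pi_head; lia.
by have := pi_mid (_ : 0 < r.+1 <= j - 2); have := count_beta_pos (_ : r.+2 < j); lia.
Qed.

Lemma pi_nonincr r : r.+1 < M - 2 -> pi r.+1 <= pi r.
Proof.
move=> Hr; case: (ltnP (j - 2) r.+1) => Hr1; last first.
  have := @pi_mid r.+1; have := count_size (fun x => r.+2 < x) beta.
  case: r Hr Hr1 => [|r] Hr Hr1; first by rewrite pi_head; have := Q5_beta_size; lia.
  have := @pi_mid r.+1.
  have : count (fun x => r.+3 < x) beta <= count (fun x => r.+2 < x) beta.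
    by apply: sub_count => x /ltnW.
  lia.
have := @pi_low r.+1 Hr1; case: (ltnP (j - 2) r) => Hr2.
  by have := @pi_low r Hr2; have := part_antimono Q5_sorted (leqnSn r.+2); lia.
have Er : r.+3 = j.+1 by have := Q5_j; lia.
by rewrite Er excess_corner; have := pi_ge_excess Hr2; lia.
Qed.

Lemma pi_le_head r : r < M - 2 -> pi r <= pi 0.
Proof. by elim: r => [//|r IH] Hr; apply: leq_trans (pi_nonincr Hr) (IH _); lia. Qed.

Lemma pi_head_pos : 0 < pi 0.
Proof. by rewrite pi_head; have := Q5_beta_long; have := Q5_top (_ : 0 < 1 <= M); lia. Qed.

Lemma nth_diff k : k < j ->
  nth 0 D k + part l j.+1 = part l k.+1 + 1 + ((k == 0) && odd m.-1).
Proof.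
by move=> Hk; rewrite nth_mkseq //; have := @part_antimono l k.+1 j.+1 Q5_sorted; lia.
Qed.

Lemma diff_sorted : sorted geq D.
Proof.
apply/(sortedP 0) => k; rewrite size_mkseq => Hk.
have := nth_diff (ltnW Hk); have := nth_diff Hk.
by have := part_antimono Q5_sorted (leqnSn k.+1); case: (k == 0); lia.
Qed.

Lemma diff_pos : all (fun x => 0 < x) D.
Proof.
apply/(all_nthP 0) => k; rewrite size_mkseq => Hk.
by have := nth_diff Hk; have := @part_antimono l k.+1 j.+1 Q5_sorted; lia.
Qed.

Lemma diff_head_le : nth 0 D 0 <= pi 0.
Proof.
have := nth_diff (_ : 0 < j); rewrite pi_head /= => HD.
have := excess_corner; have := Q5_beta_long; have := Q5_j.
have : odd m.-1 <= 1 by case: odd.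
lia.
Qed.

Lemma code_sorted : sorted geq (delta_code m l).
Proof.
rewrite /= (path_sortedE geq_trans) diff_sorted andbT.
apply/(all_nthP 0) => k Hk; apply: leq_trans diff_head_le.
exact: sorted_geq_nth diff_sorted _.
Qed.

Lemma code_max : \max_(x <- delta_code m l) x = pi 0.
Proof. exact: sorted_max_head code_sorted. Qed.

Lemma code_count_pos : count (fun x => 0 < x) (delta_code m l) = j.+1.
Proof.
have /allP Hpos := diff_pos; rewrite /= pi_head_pos (eq_in_count (a2 := predT)) //.
by rewrite count_predT size_mkseq.
Qed.

Lemma M_ge3 : 3 <= M.
Proof. by have := Q5_j; lia. Qed.

Lemma size_top_block : size (top_block m l) = M - 2.
Proof. exact: size_mkseq. Qed.

Lemma nth_phi5 r : nth 0 (phi5 m l) r =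
  if r < M - 2 then j.+1 + pi r
  else if r <= M then j.+1
  else count (fun x => r - M.+1 < x) (delta_code m l).
Proof.
have HM := M_ge3; rewrite nth_cat size_top_block.
case: ltnP => H1; first by rewrite nth_mkseq.
rewrite nth_cat size_nseq; case: ltnP => H2.
  by rewrite nth_nseq H2; have -> : r <= M by lia.
have -> : (r <= M) = false by lia.
by rewrite nth_conj; have -> : r - (M - 2) - 3 = r - M.+1 by lia.
Qed.

Lemma phi5_sorted : sorted geq (phi5 m l).
Proof.
apply/(sortedP 0) => i _; rewrite !nth_phi5.
case: (ltnP i.+1 (M - 2)) => H1; first by rewrite ltnW //= leq_add2l pi_nonincr.
case: (ltnP i (M - 2)) => H2.
  by rewrite (_ : i < M) ?leq_addr //; lia.
case: (leqP i.+1 M) => H3; first by rewrite (ltnW H3) /=.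
case: (leqP i M) => H4.
  by rewrite (_ : i.+1 - M.+1 = 0) ?code_count_pos //; lia.
by apply: sub_count => x /=; lia.
Qed.

Lemma phi5_pos : all (fun x => 0 < x) (phi5 m l).
Proof.
rewrite !all_cat conj_pos andbT; apply/andP; split.
  by apply/allP => x /mapP[r _ ->].
by apply/allP => x /nseqP[->].
Qed.

Lemma size_phi5 : size (phi5 m l) = M.+1 + pi 0.
Proof.
by rewrite !size_cat size_top_block size_nseq size_conj code_max; have := M_ge3; lia.
Qed.

(* Its m-Durfee height is j+1: the (m+j+1)-st part is j+1 and the next one is j+1 as well. *)
Lemma phi5_durfee : durfee_j m (phi5 m l) = j.+1.
Proof.
have HM := M_ge3; apply/anti_leq/andP; split.
  apply: durfee_le => j' Hj' _; have := nth_phi5 M.+1; rewrite subnn code_count_pos.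
  have -> : (M.+1 < M - 2) = false by lia.
  have -> : (M.+1 <= M) = false by lia.
  by have := sorted_geq_nth phi5_sorted (_ : M.+1 <= (m + j').-1); rewrite /part; lia.
apply: durfee_ge; first by rewrite size_phi5; lia.
rewrite /part nth_phi5; have -> : ((m + j.+1).-1 < M - 2) = false by lia.
by have -> : (m + j.+1).-1 <= M by lia.
Qed.

Lemma phi5_take : take (m + j.+1) (phi5 m l) = top_block m l ++ nseq 3 j.+1.
Proof.
by rewrite /phi5 catA take_size_cat // size_cat size_top_block size_nseq; have := M_ge3; lia.
Qed.

Lemma phi5_beta : durfee_beta m (phi5 m l) = conj_part (delta_code m l).
Proof.
rewrite /durfee_beta phi5_durfee /phi5 catA drop_size_cat //.
by rewrite size_cat size_top_block size_nseq; have := M_ge3; lia.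
Qed.

Lemma phi5_alpha :
  durfee_alpha m (phi5 m l) = conj_part (mkseq pi (M - 2) ++ nseq 3 0).
Proof.
rewrite /durfee_alpha phi5_durfee phi5_take map_cat map_nseq subnn -map_comp.
by congr (conj_part (_ ++ _)); apply: eq_map => r /=; rewrite addKn.
Qed.

Lemma sum_pi_low :
  \sum_(j - 1 <= r < M - 2) pi r + (m - 1) * j.+2 = \sum_(j <= i < M - 1) nth 0 l i.
Proof.
have E : \sum_(j - 1 <= r < M - 2) (pi r + j.+2) = \sum_(j - 1 <= r < M - 2) nth 0 l r.+1.
  by apply: eq_big_nat => r Hr; rewrite pi_low //; have := Q5_j; lia.
rewrite (_ : m - 1 = M - 2 - (j - 1)); last by have := Q5_j; lia.
move: E; rewrite big_split sum_nat_const_nat /= => ->.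
have -> : M - 2 = M - 1 - 1 by lia.
by rewrite sum_nat_succ //; have := Q5_j; lia.
Qed.

Lemma sum_pi_mid :
  \sum_(1 <= r < j - 1) pi r + (j - 2) =
  \sum_(1 <= r < j - 1) count (fun x => r.+1 < x) beta + (j - 2) * y.
Proof.
have E : \sum_(1 <= r < j - 1) (pi r + 1) =
         \sum_(1 <= r < j - 1) (count (fun x => r.+1 < x) beta + y).
  by apply: eq_big_nat => r Hr; apply: pi_mid; lia.
move: E; rewrite !big_split /= !sum_nat_const_nat muln1.
by have -> : j - 1 - 1 = j - 2 by lia.
Qed.

Lemma sumn_beta :
  sumn beta = (size beta).*2 + \sum_(1 <= r < j - 1) count (fun x => r.+1 < x) beta.
Proof.
have Hj := Q5_j; have /allP Hrange := Q5_beta_range.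
have Hall c : c < 2 -> count (fun x => c < x) beta = size beta.
  by move=> Hc; apply/eqP; rewrite -all_count; apply/allP => x /Hrange; lia.
rewrite -(@sum_count_gt _ j); last by apply/allP => x /Hrange /andP[].
rewrite big_ltn; last by lia.
rewrite big_ltn; last by lia.
by rewrite -(@sum_nat_succ _ 2) // !Hall // addnA addnn.
Qed.

Lemma sumn_diff :
  sumn D + j * part l j.+1 = \sum_(0 <= i < j) nth 0 l i + j + odd m.-1.
Proof.
have E : \sum_(0 <= k < j) (nth 0 D k + part l j.+1) =
         \sum_(0 <= k < j) (nth 0 l k + 1 + ((k == 0) && odd m.-1)).
  by apply: eq_big_nat => k /andP[_ Hk]; rewrite nth_diff.
have Hodd : \sum_(0 <= k < j) ((k == 0) && odd m.-1) = odd m.-1.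
  rewrite big_ltn; last by have := Q5_j; lia.
  by rewrite (eq_big_nat _ _ (F2 := fun=> 0)) ?sum_nat_const_nat ?muln0 ?addn0 // => -[].
move: E; rewrite !big_split /= !sum_nat_const_nat Hodd sumn_nth size_mkseq subn0 muln1.
exact: id.
Qed.

Lemma sumn_top :
  sumn (take M l) = \sum_(0 <= i < j) nth 0 l i + \sum_(j <= i < M - 1) nth 0 l i + j.+2.
Proof.
have HM := M_ge3; have HjM : j <= M - 1 by lia.
rewrite sumn_take; last by have := Q5_size; lia.
rewrite (@big_cat_nat _ _ _ (M - 1) 0 M) //=; last by lia.
rewrite (@big_cat_nat _ _ _ j 0 (M - 1)) //=.
rewrite (@big_ltn _ _ _ (M - 1) M); last by lia.
rewrite (@big_geq _ _ _ (M - 1).+1 M) ?addn0; last by lia.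
by rewrite (_ : nth 0 l (M - 1) = j.+2) // subn1; exact: Q5_corner.
Qed.

Lemma sumn_phi5 : sumn (phi5 m l) = n.
Proof.
have HM := M_ge3; have Hj := Q5_j.
have -> : n = sumn (take M l) + sumn beta by rewrite -Q5_sum -sumn_cat cat_take_drop.
rewrite !sumn_cat sumn_nseq sumn_conj /= sumn_mkseq big_split /= sum_nat_const_nat subn0.
rewrite (@big_ltn _ _ _ 0 (M - 2)) ?(@big_cat_nat _ _ _ (j - 1) 1 (M - 2)) /=; try lia.
rewrite sumn_top sumn_beta pi_head.
exact: (weight_balance Q5_j hm Q5_beta_size (odd_double_half m.-1) excess_corner
          sumn_diff sum_pi_mid sum_pi_low).
Qed.

Lemma max_pi_block : \max_(x <- mkseq pi (M - 2) ++ nseq 3 0) x = pi 0.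
Proof.
have HM := M_ge3; apply/anti_leq/andP; split.
  apply/bigmax_leqP_seq => x; rewrite mem_cat => /orP[/mapP[r Hr ->]|/nseqP[-> _]] _ //.
  by apply: pi_le_head; move: Hr; rewrite mem_iota add0n => /andP[].
by apply: leq_max_seq; rewrite mem_cat (@map_f _ _ pi) // mem_iota; lia.
Qed.

Lemma phi5_P5 : inP5 m n (phi5 m l).
Proof.
have HM := M_ge3.
rewrite /inP5 phi5_durfee phi5_alpha phi5_beta; apply/and5P; split => //.
- rewrite /inP_neg /partition_of /is_partition phi5_sorted phi5_pos sumn_phi5 eqxx /=.
  by rewrite /rank /part /= nth_phi5 size_phi5 (_ : 0 < M - 2) //; lia.
- by rewrite !size_conj code_max max_pi_block.
- rewrite /part /= nth_conj count_cat /= addn0.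
  by have := count_size (fun x => 0 < x) (mkseq pi (M - 2)); rewrite size_mkseq; lia.
- by rewrite /part /= nth_conj code_count_pos.
Qed.

Lemma corner_formula : part l j.+1 = if m == 1 then j.+2 else pi (j - 1) + j.+2.
Proof.
have Hj := Q5_j; case: eqP => [Em|Hm].
  by have := Q5_corner; rewrite Em add1n.
by rewrite pi_low; [congr (part l _); lia | lia | lia].
Qed.

Lemma part_formula i : 0 < i <= M -> part l i =
  if i <= j then nth 0 D i.-1 + part l j.+1 - 1 - ((i == 1) && odd m.-1)
  else if i < M then pi (i - 2) + j.+2 else j.+2.
Proof.
move=> Hi; have Hj := Q5_j; case: (leqP i j) => Hij.
  by have := nth_diff (_ : i.-1 < j); case: i Hi Hij => [|[|i]] //=; lia.
case: (ltnP i M) => HiM; last by rewrite (_ : i = M) ?Q5_corner //; lia.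
by rewrite pi_low; [congr (part l _) | | ]; lia.
Qed.

Lemma beta_count_formula c : count (fun x => c <= x) beta =
  if c <= 2 then pi 0 + 1 - y - (m.-1)./2
  else if c <= j then pi (c - 2) + 1 - y else 0.
Proof.
have /allP Hrange := Q5_beta_range.
case: (leqP c 2) => Hc2.
  have -> : count (fun x => c <= x) beta = size beta.
    by apply/eqP; rewrite -all_count; apply/allP => x /Hrange; lia.
  by rewrite pi_head; have := Q5_beta_size; lia.
case: (leqP c j) => Hcj.
  by have := @pi_mid (c - 2); rewrite (_ : (c - 2).+2 = c); lia.
rewrite (eq_in_count (a2 := pred0)) ?count_pred0 // => x /Hrange /andP[_ Hx].
by apply/negbTE; rewrite -ltnNge; lia.
Qed.

End Q5Partition.

Lemma Q5_determined m n l1 l2 : 1 <= m -> inQ5 m n l1 -> inQ5 m n l2 ->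
  durfee_j m l1 = durfee_j m l2 ->
  (forall r, r < m + durfee_j m l1 - 2 -> pi_entry m l1 r = pi_entry m l2 r) ->
  diff_part m l1 = diff_part m l2 -> l1 = l2.
Proof.
move=> hm HQ1 HQ2 Hj Hpi HD.
have HM := M_ge3 hm HQ1.
have Hc : part l1 (durfee_j m l1).+1 = part l2 (durfee_j m l2).+1.
  rewrite (corner_formula hm HQ1) (corner_formula hm HQ2) -Hj.
  by case: eqP => // Hm; rewrite Hpi //; lia.
have Hy : excess m l1 = excess m l2 by rewrite /excess Hc Hj.
have Htake : take (m + durfee_j m l1) l1 = take (m + durfee_j m l1) l2.
  apply: (@eq_from_nth _ 0) => [|k]; rewrite (Q5_take_size hm HQ1).
    by rewrite Hj (Q5_take_size hm HQ2).
  move=> Hk; rewrite !nth_take //.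
  have Hk' : 0 < k.+1 <= m + durfee_j m l1 by lia.
  change (part l1 k.+1 = part l2 k.+1).
  rewrite (part_formula hm HQ1 Hk') (@part_formula _ _ l2 hm HQ2 k.+1) -?Hj // HD Hc Hj.
  by case: ifP => // _; case: ifP => // Hlt; rewrite Hpi -?Hj; lia.
have Hbeta : durfee_beta m l1 = durfee_beta m l2.
  apply: sorted_geq_eq; [exact: drop_sorted (Q5_sorted hm HQ1)|
                        exact: drop_sorted (Q5_sorted hm HQ2)| move=> c].
  rewrite (beta_count_formula hm HQ1 c) (beta_count_formula hm HQ2 c) -Hj Hy.
  case: ifP => _; first by rewrite Hpi //; lia.
  by case: ifP => // Hcj; rewrite Hpi //; lia.
rewrite -(cat_take_drop (m + durfee_j m l1) l1) -(cat_take_drop (m + durfee_j m l2) l2).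
by rewrite -Hj Htake; congr (_ ++ _); move: Hbeta; rewrite /durfee_beta -Hj.
Qed.

(* phi5 l determines j (its Durfee height is j+1), pi (its top block) and D (its beta). *)
Lemma phi5_inj m n l1 l2 : 1 <= m -> inQ5 m n l1 -> inQ5 m n l2 ->
  phi5 m l1 = phi5 m l2 -> l1 = l2.
Proof.
move=> hm HQ1 HQ2 Heq.
have Hj : durfee_j m l1 = durfee_j m l2.
  by apply: succn_inj; rewrite -(phi5_durfee hm HQ1) -(phi5_durfee hm HQ2) Heq.
apply: (Q5_determined hm HQ1 HQ2 Hj).
  move=> r Hr; have := congr1 (nth 0 ^~ r) Heq.
  by rewrite /= (nth_phi5 hm HQ1) (nth_phi5 hm HQ2) -Hj Hr => /addnI.
have := congr1 (durfee_beta m) Heq; rewrite (phi5_beta hm HQ1) (phi5_beta hm HQ2).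
move=> Hconj; have Hsz : size (delta_code m l1) = size (delta_code m l2).
  by rewrite /= !size_mkseq Hj.
by case: (conj_inj (code_sorted hm HQ1) (code_sorted hm HQ2) Hsz Hconj) => _ ->.
Qed.

Theorem lemma4p6 (m n : nat) (hm : 1 <= m) (hn : 1 <= n) :
  exists f : seq nat -> seq nat,
    (forall l, inQ5 m n l -> inP5 m n (f l)) /\
    (forall l1 l2, inQ5 m n l1 -> inQ5 m n l2 -> f l1 = f l2 -> l1 = l2).
Proof.
exists (phi5 m); split.
  by move=> l; exact: phi5_P5.
by move=> l1 l2; exact: phi5_inj.
Qed.
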